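(* Let $N\ge1$ and let $f=|0,\dots,N-1|$, $g=|0,\dots,N-2,N|$, $h=|0,\dots,N-2,N+1|$, $s=|0,\dots,N-3,N-1,N|$ be Casoratians of $\boldsymbol\psi$ (see context), as functions of $(n,m,\beta)$. Then (alternative GD-4 (A-2) bilinear form) $$\widetilde f(p\dot f+\dot g)-(p-b)f\widetilde{\dot f}-(b\widetilde f+\widetilde g)\dot f=0,\qquad \widehat f(q\dot f+\dot g)-(q-b)f\widehat{\dot f}-(b\widehat f+\widehat g)\dot f=0,$$ $$\widetilde f(b^2\dot f-b\dot g+\dot h)+p\widetilde f(\dot g-b\dot f)-(p-b)f(\widetilde{\dot g}-b\widetilde{\dot f})-\dot f\widetilde h=0,$$ $$\widehat f(b^2\dot f-b\dot g+\dot h)+q\widehat f(\dot g-b\dot f)-(q-b)f(\widehat{\dot g}-b\widehat{\dot f})-\dot f\widehat h=0,$$ $$\widetilde f(pg+h)-\widetilde g(pf+g)+f\widetilde s=0,\qquad \widehat f(qg+h)-\widehat g(qf+g)+f\widehat s=0,$$ $$(p-q)(\widetilde f\widehat f-f\widehat{\widetilde f})+\widetilde f\widehat g-\widehat f\widetilde g=0,$$ $$\big[H(p,q)f\widehat{\widetilde{\dot f}}+s\widehat{\widetilde{\dot f}}+(p+q-\alpha_3)g\widehat{\widetilde{\dot f}}-((p+q-\alpha_3)f+g)(\widehat{\widetilde{\dot g}}-b\widehat{\widetilde{\dot f}})+f(\widehat{\widetilde{\dot h}}-b\widehat{\widetilde{\dot g}}+b^2\widehat{\widetilde{\dot f}})\big](p-q)-p_b\widetilde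 f\widehat{\dot f}+q_b\widehat f\widetilde{\dot f}=0.$$
   Context: Fix $\alpha_1,\alpha_2,\alpha_3\in\mathbb C$, $G(\omega,k)=\omega^4-k^4+\alpha_3(\omega^3-k^3)+\alpha_2(\omega^2-k^2)+\alpha_1(\omega-k)$, $H(p,q)=p^2+pq+q^2-\alpha_3(p+q)+\alpha_2$. Let $p,q,a,b\in\mathbb C$ be pairwise distinct, $p_b=G(-p,-b)/(p-b)$, $q_b=G(-q,-b)/(q-b)$. Fix $N\ge1$, $k_1,\dots,k_N\in\mathbb C$; for each $s$ let $\omega_1(k_s),\dots,\omega_4(k_s)$ be the four roots in $\omega$ of $G(-\omega,-k_s)=0$, with $\omega_4(k_s)=k_s$. For constants $\rho^{(0)}_{j,s}$ let $\psi_s(n,m,\alpha,\beta,l)=\sum_{j=1}^4\rho^{(0)}_{j,s}(-\omega_j(k_s))^l(p-\omega_j(k_s))^n(q-\omega_j(k_s))^m(a-\omega_j(k_s))^\alpha(b-\omega_j(k_s))^\beta$ and $\boldsymbol\psi(l)=(\psi_1,\dots,\psi_N)^T$. Casoratian notation: $|l_1,\dots,l_N|=\det(\boldsymbol\psi(l_1),\dots,\boldsymbol\psi(l_N))$; a run ''$0,\dots,j$'' with $j<0$ is empty, and if the listed indices number more than $N$ the symbol is $0$. Shifts: $\widetilde F=F(n+1,m,\beta)$, $\widehat F=F(n,m+1,\beta)$, $\dot F=F(n,m,\beta+1)$, composed as needed. *)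

From HB Require Import structures.
From mathcomp Require Import all_boot all_order all_algebra.
From mathcomp Require Import reals complex.
Set Implicit Arguments. Unset Strict Implicit. Unset Printing Implicit Defensive.
Import Order.TTheory GRing.Theory Num.Theory.
Local Open Scope ring_scope.

Section Defs.
Variable C : fieldType.

Definition Gf (a1 a2 a3 w k : C) : C :=
  w ^+ 4 - k ^+ 4 + a3 * (w ^+ 3 - k ^+ 3) + a2 * (w ^+ 2 - k ^+ 2) + a1 * (w - k).

Definition Hf (a2 a3 p q : C) : C := p ^+ 2 + p * q + q ^+ 2 - a3 * (p + q) + a2.

Definition psi (N : nat) (rho om : 'I_N -> 'I_4 -> C) (p q a b : C)
  (n m al be : int) (l : nat) (s : 'I_N) : C :=
  \sum_(j < 4) rho s j * (- om s j) ^+ l * (p - om s j) ^ n * (q - om s j) ^ m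
     * (a - om s j) ^ al * (b - om s j) ^ be.

(* Casoratian |l_1,...,l_k| : determinant with columns psi(l_1),...,psi(l_k);
   zero if the number of listed indices differs from N. *)
Definition casor (N : nat) (rho om : 'I_N -> 'I_4 -> C) (p q a b : C)
  (al : int) (cols : seq nat) (n m be : int) : C :=
  if size cols == N then
    \det (\matrix_(i < N, j < N) psi rho om p q a b n m al be (nth 0%N cols j) i)
  else 0.

Definition cols_f (N : nat) : seq nat := iota 0 N.
Definition cols_g (N : nat) : seq nat := iota 0 N.-1 ++ [:: N].
Definition cols_h (N : nat) : seq nat := iota 0 N.-1 ++ [:: N.+1].
Definition cols_s (N : nat) : seq nat := iota 0 (N - 2) ++ [:: N.-1; N].
End Defs.

From HB Require Import structures.
From mathcomp Require Import all_boot all_order all_algebra.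
From mathcomp Require Import reals complex.
From mathcomp Require Import ring zify.
Import Order.TTheory GRing.Theory Num.Theory.
Set Implicit Arguments. Unset Strict Implicit. Unset Printing Implicit Defensive.
Local Open Scope ring_scope.

(** Everything follows from one Plücker relation between N x N determinants: for N - 1
    columns I and N + 1 columns J,  sum_k (-1)^k |J without J_k| |I, J_k| = 0, the Laplace
    expansion of an (N + 1)-determinant with a repeated row.  The columns psi(l) satisfy
    psi~(l) = p psi(l) + psi(l + 1), and likewise for the hat (q) and dot (b) shifts, so
    column operations write the Casoratian of a shifted family as a sum of Casoratians of
    the unshifted one with a column deleted, weighted by powers of the shift parameter.
    Taking for I the first N - 1 columns of one family and for J consecutive columns of
    another, the Plücker sum collapses to a handful of Casoratians, which is the bilinear
    identity.  For the last identity, the dispersion relation G(-om, -k) = 0 identifies a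
    four-term combination of dotted columns with psi itself, its rows scaled by
    G(-k_s, -b). *)

Definition delete {T : Type} (k : nat) (s : seq T) := take k s ++ drop k.+1 s.

Section Delete.
Variable T : Type.
Implicit Types (s t : seq T) (x : T).

Lemma map_delete (U : Type) (f : T -> U) k s : map f (delete k s) = delete k (map f s).
Proof. by rewrite /delete map_cat map_take map_drop. Qed.

Lemma size_delete k s : (k < size s)%N -> size (delete k s) = (size s).-1.
Proof. by move=> ks; rewrite size_cat size_take size_drop ks; lia. Qed.

Lemma nth_delete x0 k s i : nth x0 (delete k s) i = nth x0 s (bump k i).
Proof.
rewrite /delete /bump nth_cat size_take.
case: (ltnP k (size s)) => [ks | sk].
  case: ltnP => [ik | ki]; first by rewrite add0n nth_take.
  by rewrite add1n nth_drop; congr nth; lia.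
case: ltnP => [hi | ih].
  by rewrite nth_take ?(leq_trans hi) // leqNgt (leq_trans hi sk).
by rewrite drop_oversize ?nth_nil ?nth_default //; case: (k <= i)%N => /=; lia.
Qed.

Lemma delete_cat k s t : (k < size s)%N -> delete k (s ++ t) = delete k s ++ t.
Proof.
move=> ks; rewrite /delete takel_cat ?(ltnW ks) // drop_cat -catA.
case: ltnP => // sk; have -> : k.+1 = size s by lia.
by rewrite subnn drop0 drop_size.
Qed.

Lemma delete_cat_size s x t : delete (size s) (s ++ x :: t) = s ++ t.
Proof.
rewrite /delete take_size_cat // -cat1s catA drop_size_cat //.
by rewrite size_cat addn1.
Qed.

Lemma nth_cat_cons_neq x0 s t x y j :
  j != size s -> nth x0 (s ++ x :: t) j = nth x0 (s ++ y :: t) j.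
Proof.
move=> js; rewrite !nth_cat; case: ltnP => // sj.
have : (0 < j - size s)%N by rewrite subn_gt0 ltn_neqAle eq_sym js.
by case: (j - size s)%N.
Qed.

End Delete.

Lemma delete_iota0_last n : delete n (iota 0 n.+1) = iota 0 n.
Proof. by rewrite -addn1 iotaD -{1}(size_iota 0 n) delete_cat_size cats0. Qed.

Lemma delete_iota0S j n : (j < n)%N -> delete j (iota 0 n.+1) = delete j (iota 0 n) ++ [:: n].
Proof. by move=> jn; rewrite -addn1 iotaD delete_cat // size_iota. Qed.

Lemma map_iota0S_cat (T : Type) (f : nat -> T) n s :
  map f (iota 0 n.+1) ++ s = map f (iota 0 n) ++ f n :: s.
Proof. by rewrite -addn1 iotaD map_cat -catA. Qed.

Section Casoratian.
Variables (C : fieldType) (N : nat).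

Lemma sumr_nat_pred (F : nat -> C) n : (0 < n)%N ->
  \sum_(0 <= k < n) F k = \sum_(0 <= k < n.-1) F k + F n.-1.
Proof. by case: n => // n _; rewrite big_nat_recr. Qed.

Lemma sumr_nat_recr (F : nat -> C) n :
  \sum_(0 <= i < n.+1) F i = \sum_(0 <= i < n) F i + F n.
Proof. by rewrite big_nat_recr. Qed.

Definition colvec := 'I_N -> C.
Definition zcol : colvec := fun=> 0.
Definition colmx (s : seq colvec) : 'M[C]_N := \matrix_(i, j) nth zcol s j i.
Definition detc (s : seq colvec) : C := if size s == N then \det (colmx s) else 0.

Lemma detc_linear_form (a b : seq colvec) :
  exists c : colvec, forall x, detc (a ++ x :: b) = \sum_i x i * c i.
Proof.
have sE x : size (a ++ x :: b) = (size a + size b).+1 by rewrite size_cat addnS.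
rewrite /detc; case: (eqVneq (size a + size b).+1 N) => sN; last first.
  by exists zcol => x; rewrite sE (negbTE sN) big1 // => i _; rewrite mulr0.
have ka : (size a < N)%N by rewrite -sN ltnS leq_addr.
pose k := Ordinal ka.
exists (fun i => cofactor (colmx (a ++ zcol :: b)) i k) => x.
rewrite sE sN eqxx (expand_det_col _ k); apply: eq_bigr => i _.
rewrite mxE nth_cat ltnn subnn; congr (_ * (_ * \det _)).
apply/matrixP => r t; rewrite !mxE (@nth_cat_cons_neq _ zcol a b x zcol) //.
by have := neq_lift k t; rewrite eq_sym.
Qed.

Lemma detc_lin (a b : seq colvec) x y z c : (forall i, x i = c * y i + z i) ->
  detc (a ++ x :: b) = c * detc (a ++ y :: b) + detc (a ++ z :: b).
Proof.
move=> hx; have [cf hcf] := detc_linear_form a b.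
rewrite !hcf mulr_sumr -big_split; apply: eq_bigr => i _; by rewrite hx mulrDl mulrA.
Qed.

Lemma detc_dup (s : seq colvec) i j : (i < j < size s)%N ->
  nth zcol s i =1 nth zcol s j -> detc s = 0.
Proof.
case/andP=> ij js eq_ij; rewrite /detc; case: eqP => // sN.
have jN : (j < N)%N by rewrite -sN.
rewrite -det_tr (@determinant_alternate _ _ _ (Ordinal (ltn_trans ij jN)) (Ordinal jN)) //.
  by rewrite -(inj_eq val_inj) /= neq_ltn ij.
by move=> t; rewrite !mxE.
Qed.

Lemma detc_adj_dup (a b : seq colvec) x : detc (a ++ x :: x :: b) = 0.
Proof.
apply: (@detc_dup _ (size a) (size a).+1); first by rewrite size_cat /=; lia.
by move=> t; rewrite nth_cat ltnn subnn nth_cat ltnNge leqnSn /= subSn // subnn.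
Qed.

Lemma detc_swap (a b : seq colvec) x y : detc (a ++ x :: y :: b) = - detc (a ++ y :: x :: b).
Proof.
have lin (a' b' : seq colvec) u v : detc (a' ++ (fun i => u i + v i) :: b') =
    detc (a' ++ u :: b') + detc (a' ++ v :: b').
  by rewrite (@detc_lin a' b' _ u v 1) ?mul1r // => i; rewrite mul1r.
have e u s : a ++ u :: s = rcons a u ++ s by rewrite cat_rcons.
have := detc_adj_dup a b (fun i => x i + y i).
rewrite lin !e !lin -!e !detc_adj_dup add0r addr0.
by move/eqP; rewrite addr_eq0 => /eqP.
Qed.

Lemma detc_rot (a L : seq colvec) x :
  detc (a ++ x :: L) = (-1) ^+ size L * detc (a ++ L ++ [:: x]).
Proof.
elim: L a => [|y L IH] a /=; first by rewrite expr0 mul1r.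
by rewrite detc_swap -cat_rcons IH cat_rcons exprS mulN1r mulNr.
Qed.

(* Laplace expansion along row 0 of the (N + 1)-matrix whose row 0 repeats row r of J. *)
Lemma sum_signed_delete (J : seq colvec) r : size J = N.+1 ->
  \sum_(0 <= k < N.+1) (-1) ^+ k * nth zcol J k r * detc (delete k J) = 0.
Proof.
rewrite big_mkord => sJ.
pose A := \matrix_(i < N.+1, k < N.+1) nth zcol J k (odflt r (unlift ord0 i)).
have detA : \det A = 0.
  apply: (@determinant_alternate _ _ A ord0 (lift ord0 r)); first by rewrite neq_lift.
  by move=> k; rewrite !mxE liftK unlift_none.
rewrite -[RHS]detA (expand_det_row _ ord0); apply: eq_bigr => k _.
have -> : detc (delete k J) = \det (row' ord0 (col' k A)).
  rewrite /detc size_delete sJ // eqxx; congr (\det _).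
  by apply/matrixP => i j; rewrite !mxE liftK /= nth_delete.
by rewrite /cofactor mxE unlift_none /= add0n; ring.
Qed.

Lemma detc_plucker (I J : seq colvec) : size J = N.+1 ->
  \sum_(0 <= k < N.+1) (-1) ^+ k * detc (delete k J) * detc (I ++ [:: nth zcol J k]) = 0.
Proof.
move=> sJ; have [c hc] := detc_linear_form I [::].
under eq_bigr do rewrite hc mulr_sumr.
rewrite exchange_big big1 // => r _.
have := congr1 ( *%R (c r)) (sum_signed_delete r sJ).
rewrite mulr0 mulr_sumr => h; rewrite -[RHS]h; apply: eq_bigr => k _; ring.
Qed.

Lemma detc_rowscale (d : colvec) (w : nat -> colvec) cols :
  detc (map (fun l i => d i * w l i) cols) = (\prod_i d i) * detc (map w cols).
Proof.
rewrite /detc !size_map; case: eqP => sN; last by rewrite mulr0.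
have -> : colmx (map (fun l i => d i * w l i) cols) = diag_mx (\row_i d i) *m colmx (map w cols).
  by rewrite mul_diag_mx; apply/matrixP => i j; rewrite !mxE !(nth_map 0%N) ?sN // mxE.
by rewrite det_mulmx det_diag; congr (_ * _); apply: eq_bigr => i _; rewrite mxE.
Qed.

Definition shifted (r : C) (w v : nat -> colvec) := forall l i, v l i = r * w l i + w l.+1 i.

Lemma detc_shift_head w u r m Y : shifted r w u ->
  detc (map w (iota 0 m.+1) ++ Y) = detc (w 0%N :: map u (iota 0 m) ++ Y).
Proof.
move=> hu; elim: m Y => // m IH Y.
rewrite map_iota0S_cat (@detc_lin _ _ _ (w m) (u m) (- r)); last by move=> i; rewrite hu; ring.
by rewrite map_iota0S_cat detc_adj_dup mulr0 add0r IH -map_iota0S_cat.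
Qed.

Lemma detc_shift_expand w u r m Y : shifted r w u ->
  detc (map u (iota 0 m) ++ Y) =
  \sum_(0 <= j < m.+1) r ^+ j * detc (map w (delete j (iota 0 m.+1)) ++ Y).
Proof.
move=> hu; elim: m Y => [|m IH] Y; first by rewrite big_nat1 expr0 mul1r.
have lin_um (a : seq colvec) : detc (a ++ u m :: Y) =
    r * detc (a ++ w m :: Y) + detc (a ++ w m.+1 :: Y) by exact: detc_lin.
have step j : (j < m)%N -> detc (map w (delete j (iota 0 m.+1)) ++ u m :: Y) =
    detc (map w (delete j (iota 0 m.+2)) ++ Y).
  move=> jm; rewrite lin_um [in X in r * X]delete_iota0S // map_cat -catA.
  by rewrite detc_adj_dup mulr0 add0r (@delete_iota0S j m.+1 (ltnW jm)) map_cat -catA.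
rewrite map_iota0S_cat IH sumr_nat_recr [RHS]sumr_nat_recr [in RHS]sumr_nat_recr.
under eq_big_nat => j /andP[_ jm] do rewrite step //.
rewrite lin_um !delete_iota0_last (@delete_iota0S m m.+1) // delete_iota0_last map_cat -catA /=.
by rewrite -map_iota0S_cat exprS; ring.
Qed.

Lemma sumr_nat_vanish_below (F : nat -> C) m n : (m <= n)%N ->
  (forall k, (k < m)%N -> F k = 0) -> \sum_(0 <= k < n) F k = \sum_(m <= k < n) F k.
Proof.
move=> mn F0; rewrite (big_cat_nat (leq0n m) mn) /= big_nat_cond big1 ?add0r //.
by move=> k /andP [/andP [_ km] _]; exact: F0.
Qed.

Definition casf (w : nat -> colvec) := detc (map w (cols_f N)).
Definition casg (w : nat -> colvec) := detc (map w (cols_g N)).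
Definition cash (w : nat -> colvec) := detc (map w (cols_h N)).
Definition cass (w : nat -> colvec) := detc (map w (cols_s N)).

Definition bord (T : nat -> colvec) x := detc (map T (iota 0 N.-1) ++ [:: x]).

Definition casdel (w : nat -> colvec) e k := detc (map w (delete k (iota 0 N ++ [:: e]))).

Lemma cass_eq0 w : (N <= 1)%N -> cass w = 0.
Proof.
by move=> N1; rewrite /cass /detc size_map size_cat size_iota /=; case: eqP => //; lia.
Qed.

Lemma bord_lin T x y z c : (forall i, x i = c * y i + z i) ->
  bord T x = c * bord T y + bord T z.
Proof. exact: detc_lin. Qed.

Lemma bord_low T k : (k < N.-1)%N -> bord T (T k) = 0.
Proof.
move=> kN; apply: (@detc_dup _ k N.-1).
  by rewrite kN size_cat size_map size_iota addn1 /=.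
move=> t; rewrite nth_cat size_map size_iota kN (nth_map 0%N) ?size_iota // nth_iota //.
by rewrite nth_cat size_map size_iota ltnn subnn.
Qed.

Lemma bord_N T : bord T (T N) = casg T.
Proof. by rewrite /bord /casg /cols_g map_cat. Qed.

Lemma bord_S T : bord T (T N.+1) = cash T.
Proof. by rewrite /bord /cash /cols_h map_cat. Qed.

Lemma casdel_low w e k : (k < N)%N ->
  casdel w e k = detc (map w (delete k (iota 0 N)) ++ [:: w e]).
Proof. by move=> kN; rewrite /casdel delete_cat ?size_iota // map_cat. Qed.

Lemma casdel_subn2 w : (1 < N)%N -> casdel w N (N - 2) = cass w.
Proof.
move=> N1; rewrite casdel_low ?subn_lt0 //; last by lia.
have -> : iota 0 N = iota 0 (N - 2) ++ [:: N - 2; N.-1]%N.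
  by rewrite -[in LHS](subnK N1) iotaD add0n /=; congr (_ ++ [:: _; _]); lia.
by rewrite -{1}(size_iota 0 (N - 2)) delete_cat_size /cass /cols_s !map_cat -catA.
Qed.

(* The Plücker relation for J = w 0, ..., w (N - 1), w e, as a linear form in the values
   a k that play the role of |I, w k|; the factor (-1)^(N-1) makes its evaluations below
   sign-free. *)
Definition plucker_form (w : nat -> colvec) e (a : nat -> C) :=
  (-1) ^+ N.-1 *
  (\sum_(0 <= k < N) (-1) ^+ k * casdel w e k * a k + (-1) ^+ N * casf w * a e).

Lemma plucker_form_scale_lin w e (a b c : nat -> C) x y z :
  (forall k, x * a k = y * b k + z * c k) ->
  x * plucker_form w e a = y * plucker_form w e b + z * plucker_form w e c.
Proof.
move=> habc; rewrite /plucker_form.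
have hsum : x * \sum_(0 <= k < N) (-1) ^+ k * casdel w e k * a k =
    y * \sum_(0 <= k < N) (-1) ^+ k * casdel w e k * b k +
    z * \sum_(0 <= k < N) (-1) ^+ k * casdel w e k * c k.
  rewrite !mulr_sumr -big_split; apply: eq_bigr => k _ /=.
  by rewrite mulrCA habc; ring.
move: hsum; set Sa := \sum_(0 <= k < N) _ * a k; move=> hsum.
have -> : x * ((-1) ^+ N.-1 * (Sa + (-1) ^+ N * casf w * a e)) =
    (-1) ^+ N.-1 * (x * Sa + (-1) ^+ N * casf w * (x * a e)) by ring.
by rewrite hsum habc; ring.
Qed.

Lemma plucker_form_lin w e (a b c : nat -> C) y z :
  (forall k, a k = y * b k + z * c k) ->
  plucker_form w e a = y * plucker_form w e b + z * plucker_form w e c.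
Proof.
by move=> habc; rewrite -[LHS]mul1r; apply: plucker_form_scale_lin => k; rewrite mul1r.
Qed.

Lemma plucker_form_eq0 w T e : plucker_form w e (fun k => bord T (w k)) = 0.
Proof.
pose J := iota 0 N ++ [:: e].
have sJ : size (map w J) = N.+1 by rewrite size_map size_cat size_iota addn1.
have nthJ k : (k < N)%N -> nth zcol (map w J) k = w k.
  move=> kN; rewrite (nth_map 0%N) /J ?nth_cat ?size_cat size_iota ?kN ?nth_iota //.
  by rewrite addn1 ltnS ltnW.
have nthJN : nth zcol (map w J) N = w e.
  by rewrite (nth_map 0%N) /J ?nth_cat ?size_cat size_iota ?ltnn ?subnn // addn1.
have := detc_plucker (map T (iota 0 N.-1)) sJ.
have dN : delete N J = iota 0 N by rewrite /J -{1}(size_iota 0 N) delete_cat_size cats0.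
rewrite sumr_nat_recr nthJN -map_delete dN.
move=> P; apply/eqP; rewrite /plucker_form mulf_eq0 signr_eq0 /=; apply/eqP.
rewrite -[RHS]P; congr (_ + _); apply: eq_big_nat => k /andP [_ kN].
by rewrite nthJ // /casdel map_delete.
Qed.

Section PositiveSize.
Hypothesis N_gt0 : (0 < N)%N.

Lemma signr_pred : (-1) ^+ N = - (-1) ^+ N.-1 :> C.
Proof. by rewrite -{1}(prednK N_gt0) exprS mulN1r. Qed.

Lemma bord_pred T : bord T (T N.-1) = casf T.
Proof. by rewrite /bord -map_iota0S_cat cats0 prednK. Qed.

Lemma casdel_pred w e : casdel w e N.-1 = bord w (w e).
Proof. by rewrite casdel_low ?prednK // -{2}(prednK N_gt0) delete_iota0_last. Qed.

Lemma bord_head w T r : shifted r w T -> bord T (w 0%N) = (-1) ^+ N.-1 * casf w.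
Proof.
move=> hT; have := detc_rot [::] (map T (iota 0 N.-1)) (w 0%N).
rewrite /= size_map size_iota -[map T _]cats0 -(detc_shift_head _ _ hT) cats0 prednK // => e.
by rewrite /casf /cols_f e signrMK cats0.
Qed.

Section ShiftedBord.
Variables (r : C) (w T : nat -> colvec).
Hypothesis hT : shifted r w T.

Lemma bord_shift_succ k : bord T (w k.+1) = - r * bord T (w k) + bord T (T k).
Proof. by apply: bord_lin => i; rewrite hT; ring. Qed.

Lemma bord_shift_low k : (k < N)%N -> bord T (w k) = (- r) ^+ k * ((-1) ^+ N.-1 * casf w).
Proof.
elim: k => [|k IH] kN; first by rewrite expr0 mul1r (bord_head hT).
rewrite bord_shift_succ IH ?(ltnW kN) // bord_low; last by rewrite -ltnS prednK.
by rewrite exprS; ring.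
Qed.

Lemma bord_shift_last : bord T (w N) = casf T + (- r) ^+ N * ((-1) ^+ N.-1 * casf w).
Proof.
rewrite -{1}(prednK N_gt0) bord_shift_succ bord_pred bord_shift_low ?ltn_predL //.
by rewrite -[in RHS](prednK N_gt0) exprS; ring.
Qed.
End ShiftedBord.

Lemma plucker_form_bord xi T e :
  plucker_form xi e (fun k => bord T (T k)) = casdel xi e N.-1 * casf T - casf xi * bord T (T e).
Proof.
rewrite /plucker_form sumr_nat_pred // big_nat_cond big1 ?add0r; last first.
  by move=> k /andP [/andP [_ kN] _]; rewrite bord_low // mulr0.
by rewrite bord_pred signr_pred -[RHS](signrMK N.-1); ring.
Qed.

Lemma plucker_form_bord_succ xi T :
  plucker_form xi N (fun k => bord T (T k.+1)) =
  casg xi * casg T - cass xi * casf T - casf xi * cash T.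
Proof.
have low : \sum_(0 <= k < N.-1) (-1) ^+ k * casdel xi N k * bord T (T k.+1) =
    (-1) ^+ N.-1 * (- cass xi * casf T).
  case: (ltnP 1 N) => N1; last first.
    have -> : N.-1 = 0%N by move: N1; case: (N) => [|[|]].
    by rewrite big_geq // cass_eq0 // oppr0 mul0r mulr0.
  have eN : N.-1 = (N - 2).+1 by lia.
  rewrite (@sumr_nat_vanish_below _ (N - 2)%N); last 2 first.
  - lia.
  - by move=> k kN; rewrite bord_low ?mulr0 //; lia.
  rewrite eN big_nat1 -eN bord_pred casdel_subn2 //.
  have -> : (-1) ^+ (N - 2) = - (-1) ^+ N.-1 :> C.
    by rewrite -signr_pred; apply/esym; rewrite -{1}(subnK N1) exprD expr2 mulrNN !mulr1.
  ring.
rewrite /plucker_form sumr_nat_pred // low casdel_pred bord_N prednK // bord_N bord_S.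
by rewrite signr_pred -[RHS](signrMK N.-1); ring.
Qed.

Lemma plucker_form_shift r w eta xi T e : shifted r w eta -> shifted r xi T ->
  plucker_form xi e (fun k => bord eta (w k)) =
  casf w * bord T (xi e) - casf xi * bord eta (w e).
Proof.
move=> heta hT.
have expand : bord T (xi e) =
    \sum_(0 <= k < N) r ^+ k * detc (map xi (delete k (iota 0 N)) ++ [:: xi e]).
  by rewrite /bord (detc_shift_expand _ _ hT) prednK.
have geom : \sum_(0 <= k < N) (-1) ^+ k * casdel xi e k * bord eta (w k) =
    (-1) ^+ N.-1 * casf w * bord T (xi e).
  rewrite expand !mulr_sumr; apply: eq_big_nat => k /andP [_ kN].
  rewrite (bord_shift_low heta) // casdel_low // (exprNn r).
  by rewrite -[RHS](signrMK k); ring.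
by rewrite /plucker_form geom signr_pred -[RHS](signrMK N.-1); ring.
Qed.

Lemma dAKP_bilinear w xi eta T r1 r2 :
  shifted r1 w xi -> shifted r2 w eta -> shifted r2 xi T ->
  (r1 - r2) * (casf xi * casf eta - casf w * casf T) + casf xi * casg eta - casf eta * casg xi = 0.
Proof.
move=> hxi heta hT.
have P : plucker_form xi N (fun k => bord eta (xi k)) =
    (r1 - r2) * plucker_form xi N (fun k => bord eta (w k)) +
    1 * plucker_form xi N (fun k => bord eta (eta k)).
  by apply: plucker_form_lin => k; rewrite mul1r; apply: bord_lin => i; rewrite hxi heta; ring.
rewrite plucker_form_eq0 (plucker_form_shift _ heta hT) plucker_form_bord in P.
rewrite casdel_pred !bord_N (bord_shift_last heta) (bord_shift_last hT) in P.
by apply/eqP; rewrite -oppr_eq0; apply/eqP; rewrite [RHS]P; ring.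
Qed.

Lemma dAKP_bilinear_alt w xi eta T r1 r2 :
  shifted r1 w xi -> shifted r2 w eta -> shifted r2 xi T ->
  casf xi * (r1 * casf eta + casg eta) - (r1 - r2) * casf w * casf T
  - (r2 * casf xi + casg xi) * casf eta = 0.
Proof. by move=> hxi heta hT; rewrite -[RHS](dAKP_bilinear hxi heta hT); ring. Qed.

Lemma fgh_bilinear w xi eta T r1 r2 :
  shifted r1 w xi -> shifted r2 w eta -> shifted r2 xi T ->
  casf xi * (r2 ^+ 2 * casf eta - r2 * casg eta + cash eta)
  + r1 * casf xi * (casg eta - r2 * casf eta)
  - (r1 - r2) * casf w * (casg T - r2 * casf T) - casf eta * cash xi = 0.
Proof.
move=> hxi heta hT.
have P : plucker_form xi N.+1 (fun k => bord eta (xi k)) =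
    (r1 - r2) * plucker_form xi N.+1 (fun k => bord eta (w k)) +
    1 * plucker_form xi N.+1 (fun k => bord eta (eta k)).
  by apply: plucker_form_lin => k; rewrite mul1r; apply: bord_lin => i; rewrite hxi heta; ring.
rewrite plucker_form_eq0 (plucker_form_shift _ heta hT) plucker_form_bord in P.
rewrite casdel_pred !bord_S (bord_shift_succ heta) (bord_shift_succ hT) !bord_N in P.
rewrite (bord_shift_last heta) (bord_shift_last hT) in P.
by apply/eqP; rewrite -oppr_eq0; apply/eqP; rewrite [RHS]P; ring.
Qed.

Lemma fghs_bilinear w xi r : shifted r w xi ->
  casf xi * (r * casg w + cash w) - casg xi * (r * casf w + casg w) + casf w * cass xi = 0.
Proof.
move=> hxi.
have P : plucker_form xi N (fun k => bord w (xi k)) =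
    r * plucker_form xi N (fun k => bord w (w k)) +
    1 * plucker_form xi N (fun k => bord w (w k.+1)).
  by apply: plucker_form_lin => k; rewrite mul1r; apply: bord_lin => i; rewrite hxi.
rewrite plucker_form_eq0 plucker_form_bord plucker_form_bord_succ casdel_pred !bord_N in P.
by apply/eqP; rewrite -oppr_eq0; apply/eqP; rewrite [RHS]P; ring.
Qed.

Lemma dispersion_bilinear chi xi eta T ka kp kq p q c0 c1 c2 :
  shifted p chi xi -> shifted q chi eta -> shifted q xi T -> shifted p eta T ->
  (forall l i, ka l i = chi l.+3 i + c2 * chi l.+2 i + c1 * chi l.+1 i + c0 * chi l i) ->
  shifted p ka kp -> shifted q ka kq ->
  (p - q) * (casf ka * (cash T - (p + q - c2) * casg T
                       + (p ^+ 2 + p * q + q ^+ 2 - c2 * (p + q) + c1) * casf T)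
             - casg ka * (casg T - (p + q - c2) * casf T) + cass ka * casf T)
  + ((- p) ^+ 3 + c2 * (- p) ^+ 2 + c1 * (- p) + c0) * casf kp * casf eta
  - ((- q) ^+ 3 + c2 * (- q) ^+ 2 + c1 * (- q) + c0) * casf kq * casf xi = 0.
Proof.
move=> hxi heta hTxi hTeta hka hkp hkq.
set Qp := (- p) ^+ 3 + c2 * (- p) ^+ 2 + c1 * (- p) + c0.
set Qq := (- q) ^+ 3 + c2 * (- q) ^+ 2 + c1 * (- q) + c0.
set sig := p + q - c2.
(* Only (p - q) * ka k, not ka k itself, is a combination of T k.+1, T k, xi k and eta k. *)
have [c bordE] := detc_linear_form (map T (iota 0 N.-1)) [::].
have P : (p - q) * plucker_form ka N (fun k => bord T (ka k)) =
    (p - q) * plucker_form ka N (fun k => bord T (T k.+1) - sig * bord T (T k)) +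
    1 * plucker_form ka N (fun k => Qq * bord T (xi k) - Qp * bord T (eta k)).
  apply: plucker_form_scale_lin => k; rewrite /bord !bordE mul1r !mulr_sumr -!sumrB !mulr_sumr.
  rewrite -big_split /=; apply: eq_bigr => i _.
  by rewrite hka !hTxi !hxi heta /Qp /Qq /sig; ring.
have Pg : plucker_form ka N (fun k => bord T (T k.+1) - sig * bord T (T k)) =
    1 * plucker_form ka N (fun k => bord T (T k.+1)) +
    (- sig) * plucker_form ka N (fun k => bord T (T k)).
  by apply: plucker_form_lin => k; ring.
have Ph : plucker_form ka N (fun k => Qq * bord T (xi k) - Qp * bord T (eta k)) =
    Qq * plucker_form ka N (fun k => bord T (xi k)) +
    (- Qp) * plucker_form ka N (fun k => bord T (eta k)).
  by apply: plucker_form_lin => k; ring.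
rewrite plucker_form_eq0 mulr0 Pg Ph plucker_form_bord_succ plucker_form_bord in P.
rewrite casdel_pred !bord_N in P.
rewrite (plucker_form_shift _ hTxi hkq) (plucker_form_shift _ hTeta hkp) in P.
rewrite (bord_shift_last hTxi) (bord_shift_last hTeta) in P.
rewrite (bord_shift_last hkp) (bord_shift_last hkq) in P.
by apply/eqP; rewrite -oppr_eq0; apply/eqP; rewrite [RHS]P /Qp /Qq; ring.
Qed.

Section PsiColumns.
Variables (rho om : 'I_N -> 'I_4 -> C) (p q a b : C) (al : int).
Hypothesis om_nz : forall s j,
  [/\ p - om s j != 0, q - om s j != 0, a - om s j != 0 & b - om s j != 0].

Definition psicol (n m be : int) : nat -> colvec := fun l s => psi rho om p q a b n m al be l s.

Lemma casorE cols n m be : casor rho om p q a b al cols n m be = detc (map (psicol n m be) cols).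
Proof.
rewrite /casor /detc size_map; case: eqP => // sN; congr (\det _).
by apply/matrixP => i j; rewrite !mxE (nth_map 0%N) // sN.
Qed.

Lemma exprz_subS (x y : C) (e : int) :
  x - y != 0 -> (x - y) ^ (e + 1) = x * (x - y) ^ e - y * (x - y) ^ e.
Proof. by move=> xy; rewrite expfzDr // expr1z mulrC mulrBl. Qed.

Lemma psicol_shift_p n m be : shifted p (psicol n m be) (psicol (n + 1) m be).
Proof.
move=> l s; rewrite /psicol /psi mulr_sumr -big_split; apply: eq_bigr => j _ /=.
by have [nz _ _ _] := om_nz s j; rewrite exprz_subS // exprS; ring.
Qed.

Lemma psicol_shift_q n m be : shifted q (psicol n m be) (psicol n (m + 1) be).
Proof.
move=> l s; rewrite /psicol /psi mulr_sumr -big_split; apply: eq_bigr => j _ /=.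
by have [_ nz _ _] := om_nz s j; rewrite exprz_subS // exprS; ring.
Qed.

Lemma psicol_shift_b n m be : shifted b (psicol n m be) (psicol n m (be + 1)).
Proof.
move=> l s; rewrite /psicol /psi mulr_sumr -big_split; apply: eq_bigr => j _ /=.
by have [_ _ _ nz] := om_nz s j; rewrite exprz_subS // exprS; ring.
Qed.

Variables (a1 a2 a3 : C) (k : 'I_N -> C).
Hypothesis G_roots : forall s w, Gf a1 a2 a3 (- w) (- k s) = \prod_(j < 4) (w - om s j).

(* With Gf w k = P w - P k: (x + b) (x^3 + c2 x^2 + c1 x + c0) = P x - P (- b). *)
Local Notation c2 := (a3 - b).
Local Notation c1 := (a2 - b * c2).
Local Notation c0 := (a1 - b * c1).

Lemma Gf_kb_neq0 s : Gf a1 a2 a3 (- k s) (- b) != 0.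
Proof.
have -> : Gf a1 a2 a3 (- k s) (- b) = - Gf a1 a2 a3 (- b) (- k s) by rewrite /Gf; ring.
rewrite oppr_eq0 G_roots; apply/prodf_neq0 => j _.
by have [_ _ _] := om_nz s j.
Qed.

Lemma psicol_dispersion n m be l s :
  psicol n m (be + 1) l.+3 s + c2 * psicol n m (be + 1) l.+2 s + c1 * psicol n m (be + 1) l.+1 s
  + c0 * psicol n m (be + 1) l s = Gf a1 a2 a3 (- k s) (- b) * psicol n m be l s.
Proof.
rewrite /psicol /psi !mulr_sumr -!big_split; apply: eq_bigr => j _ /=.
have root : Gf a1 a2 a3 (- om s j) (- k s) = 0 by rewrite G_roots (bigD1 j) //= subrr mul0r.
have [_ _ _ nz] := om_nz s j.
rewrite -[Gf _ _ _ (- k s) _]addr0 -{1}root /Gf expfzDr // expr1z !exprS; ring.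
Qed.

Lemma psicol_dispersion_bilinear n m be : p != b -> q != b ->
  (Hf a2 a3 p q * casf (psicol n m be) * casf (psicol (n + 1) (m + 1) (be + 1))
   + cass (psicol n m be) * casf (psicol (n + 1) (m + 1) (be + 1))
   + (p + q - a3) * casg (psicol n m be) * casf (psicol (n + 1) (m + 1) (be + 1))
   - ((p + q - a3) * casf (psicol n m be) + casg (psicol n m be))
     * (casg (psicol (n + 1) (m + 1) (be + 1)) - b * casf (psicol (n + 1) (m + 1) (be + 1)))
   + casf (psicol n m be) * (cash (psicol (n + 1) (m + 1) (be + 1))
     - b * casg (psicol (n + 1) (m + 1) (be + 1)) + b ^+ 2 * casf (psicol (n + 1) (m + 1) (be + 1))))
  * (p - q)
  - Gf a1 a2 a3 (- p) (- b) / (p - b) * casf (psicol (n + 1) m be) * casf (psicol n (m + 1) (be + 1))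
  + Gf a1 a2 a3 (- q) (- b) / (q - b) * casf (psicol n (m + 1) be) * casf (psicol (n + 1) m (be + 1)) = 0.
Proof.
move=> pb qb; pose d s := Gf a1 a2 a3 (- k s) (- b).
have hkp : shifted p (fun l s => d s * psicol n m be l s) (fun l s => d s * psicol (n + 1) m be l s).
  by move=> l s; rewrite psicol_shift_p; ring.
have hkq : shifted q (fun l s => d s * psicol n m be l s) (fun l s => d s * psicol n (m + 1) be l s).
  by move=> l s; rewrite psicol_shift_q; ring.
have := dispersion_bilinear (psicol_shift_p n m (be + 1)) (psicol_shift_q n m (be + 1))
  (psicol_shift_q (n + 1) m (be + 1)) (psicol_shift_p n (m + 1) (be + 1))
  (fun l s => esym (psicol_dispersion n m be l s)) hkp hkq.
rewrite /casf /casg /cass /cash !detc_rowscale /=.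
have dP : \prod_s d s != 0 by apply/prodf_neq0 => s _; exact: Gf_kb_neq0.
have Gq x : x != b -> Gf a1 a2 a3 (- x) (- b) / (x - b) =
    - ((- x) ^+ 3 + c2 * (- x) ^+ 2 + c1 * (- x) + c0).
  move=> xb; have xb0 : x - b != 0 by rewrite subr_eq0.
  by apply: (mulIf xb0); rewrite mulfVK // /Gf; ring.
move=> H; rewrite !Gq //; apply: (mulIf dP); rewrite mul0r -[RHS]H /Hf; ring.
Qed.

End PsiColumns.

End PositiveSize.
End Casoratian.

Unset Implicit Arguments.
Local Open Scope complex_scope.

Theorem theorem4p3 (R : realType) (a1 a2 a3 p q a b : R[i])
  (N : nat) (k : 'I_N -> R[i]) (om rho : 'I_N -> 'I_4 -> R[i]) (al : int) :
  (0 < N)%N ->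
  (* p, q, a, b pairwise distinct *)
  p != q -> p != a -> p != b -> q != a -> q != b -> a != b ->
  (* om s 0..3 are the four roots (with multiplicity) in w of G(-w,-k_s) = 0,     the last one being k_s *)
  (forall s w, Gf a1 a2 a3 (- w) (- k s) = \prod_(j < 4) (w - om s j)) ->
  (forall s, om s ord_max = k s) ->
  (* the bases of the integer powers in psi are nonzero, so psi is defined *)
  (forall s j, [/\ p - om s j != 0, q - om s j != 0,
                   a - om s j != 0 & b - om s j != 0]) ->
  let f := casor rho om p q a b al (cols_f N) in
  let g := casor rho om p q a b al (cols_g N) in
  let h := casor rho om p q a b al (cols_h N) in
  let s := casor rho om p q a b al (cols_s N) in
  let pb := Gf a1 a2 a3 (- p) (- b) / (p - b) in
  let qb := Gf a1 a2 a3 (- q) (- b) / (q - b) in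
  forall n m be : int,
  let F := fun (F0 : int -> int -> int -> R[i]) (i j l : nat) =>
             F0 (n + i%:Z) (m + j%:Z) (be + l%:Z) in
  (* F f i j l = f(n+i, m+j, beta+l): i = tilde, j = hat, l = dot *)
  (F f 1%N 0%N 0%N * (p * F f 0%N 0%N 1%N + F g 0%N 0%N 1%N) - (p - b) * F f 0%N 0%N 0%N * F f 1%N 0%N 1%N
        - (b * F f 1%N 0%N 0%N + F g 1%N 0%N 0%N) * F f 0%N 0%N 1%N = 0) /\
      (      F f 0%N 1%N 0%N * (q * F f 0%N 0%N 1%N + F g 0%N 0%N 1%N) - (q - b) * F f 0%N 0%N 0%N * F f 0%N 1%N 1%N
        - (b * F f 0%N 1%N 0%N + F g 0%N 1%N 0%N) * F f 0%N 0%N 1%N = 0) /\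
      (      F f 1%N 0%N 0%N * (b ^+ 2 * F f 0%N 0%N 1%N - b * F g 0%N 0%N 1%N + F h 0%N 0%N 1%N)
        + p * F f 1%N 0%N 0%N * (F g 0%N 0%N 1%N - b * F f 0%N 0%N 1%N)
        - (p - b) * F f 0%N 0%N 0%N * (F g 1%N 0%N 1%N - b * F f 1%N 0%N 1%N)
        - F f 0%N 0%N 1%N * F h 1%N 0%N 0%N = 0) /\
      (      F f 0%N 1%N 0%N * (b ^+ 2 * F f 0%N 0%N 1%N - b * F g 0%N 0%N 1%N + F h 0%N 0%N 1%N)
        + q * F f 0%N 1%N 0%N * (F g 0%N 0%N 1%N - b * F f 0%N 0%N 1%N)
        - (q - b) * F f 0%N 0%N 0%N * (F g 0%N 1%N 1%N - b * F f 0%N 1%N 1%N)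
        - F f 0%N 0%N 1%N * F h 0%N 1%N 0%N = 0) /\
      (      F f 1%N 0%N 0%N * (p * F g 0%N 0%N 0%N + F h 0%N 0%N 0%N) - F g 1%N 0%N 0%N * (p * F f 0%N 0%N 0%N + F g 0%N 0%N 0%N)
        + F f 0%N 0%N 0%N * F s 1%N 0%N 0%N = 0) /\
      (      F f 0%N 1%N 0%N * (q * F g 0%N 0%N 0%N + F h 0%N 0%N 0%N) - F g 0%N 1%N 0%N * (q * F f 0%N 0%N 0%N + F g 0%N 0%N 0%N)
        + F f 0%N 0%N 0%N * F s 0%N 1%N 0%N = 0) /\
      ((p - q) * (F f 1%N 0%N 0%N * F f 0%N 1%N 0%N - F f 0%N 0%N 0%N * F f 1%N 1%N 0%N)
        + F f 1%N 0%N 0%N * F g 0%N 1%N 0%N - F f 0%N 1%N 0%N * F g 1%N 0%N 0%N = 0) /\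
      (      (Hf a2 a3 p q * F f 0%N 0%N 0%N * F f 1%N 1%N 1%N + F s 0%N 0%N 0%N * F f 1%N 1%N 1%N
        + (p + q - a3) * F g 0%N 0%N 0%N * F f 1%N 1%N 1%N
        - ((p + q - a3) * F f 0%N 0%N 0%N + F g 0%N 0%N 0%N) * (F g 1%N 1%N 1%N - b * F f 1%N 1%N 1%N)
        + F f 0%N 0%N 0%N * (F h 1%N 1%N 1%N - b * F g 1%N 1%N 1%N + b ^+ 2 * F f 1%N 1%N 1%N)) * (p - q)
        - pb * F f 1%N 0%N 0%N * F f 0%N 1%N 1%N + qb * F f 0%N 1%N 0%N * F f 1%N 0%N 1%N = 0).
Proof.
move=> hN _ _ hpb _ hqb _ hG _ hnz f g h s pb qb n m be F.
rewrite /F /f /g /h /s /pb /qb !casorE !addr0.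
have sp := psicol_shift_p rho al hnz.
have sq := psicol_shift_q rho al hnz.
have sb := psicol_shift_b rho al hnz.
split; first exact: (dAKP_bilinear_alt hN (sp n m be) (sb n m be) (sb (n + 1) m be)).
split; first exact: (dAKP_bilinear_alt hN (sq n m be) (sb n m be) (sb n (m + 1) be)).
split; first exact: (fgh_bilinear hN (sp n m be) (sb n m be) (sb (n + 1) m be)).
split; first exact: (fgh_bilinear hN (sq n m be) (sb n m be) (sb n (m + 1) be)).
split; first exact: (fghs_bilinear hN (sp n m be)).
split; first exact: (fghs_bilinear hN (sq n m be)).
split; first exact: (dAKP_bilinear hN (sp n m be) (sq n m be) (sq (n + 1) m be)).
exact: (psicol_dispersion_bilinear hN rho al hnz hG n m be hpb hqb).
Qed.
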